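(* Let $F$ be a field and $n_1,n_2,n_3,n_4$ positive integers; write $\mathrm{Mat}_{a,b}$ for $a\times b$ matrices over $F$. (1) Let $T_{42}\in\mathrm{Mat}_{n_4,n_2}$ and $T_{31}\in\mathrm{Mat}_{n_3,n_1}$. Then the subspace $\{X_{23}\in\mathrm{Mat}_{n_2,n_3} : T_{42}X_{23}=0,\ X_{23}T_{31}=0\}$ has codimension $n_3\operatorname{rank}(T_{42})+n_2\operatorname{rank}(T_{31})-\operatorname{rank}(T_{31})\operatorname{rank}(T_{42})$ in $\mathrm{Mat}_{n_2,n_3}$. (2) Let $T_{31}\in\mathrm{Mat}_{n_3,n_1}$, $T_{42}\in\mathrm{Mat}_{n_4,n_2}$, $T_{41}\in\mathrm{Mat}_{n_4,n_1}$, and assume that the row spaces of $T_{31}$ and $T_{41}$ (subspaces of $F^{n_1}$) intersect trivially and that the column spaces of $T_{42}$ and $T_{41}$ (subspaces of $F^{n_4}$) intersect trivially. Then the subspace $\{(X_{12},X_{34})\in\mathrm{Mat}_{n_1,n_2}\times\mathrm{Mat}_{n_3,n_4} : T_{31}X_{12}=X_{34}T_{42},\ T_{41}X_{12}=0,\ X_{34}T_{41}=0\}$ has codimension $\operatorname{rank}(T_{41})n_2+\operatorname{rank}(T_{41})n_3+\operatorname{rank}(T_{31})\operatorname{rank}(T_{42})+(n_2-\operatorname{rank}(T_{42}))\operatorname{rank}(T_{31})+(n_3-\operatorname{rank}(T_{31}))\operatorname{rank}(T_{42})$ in $\mathrm{Mat}_{n_1,n_2}\times\mathrm{Mat}_{n_3,n_4}$.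 *)

From HB Require Import structures.
From mathcomp Require Import all_boot all_order all_algebra.
Set Implicit Arguments. Unset Strict Implicit. Unset Printing Implicit Defensive.
Import GRing.Theory.

From HB Require Import structures.
From mathcomp Require Import all_boot all_order all_algebra.
From mathcomp Require Import zify.
Set Implicit Arguments. Unset Strict Implicit. Unset Printing Implicit Defensive.
Import GRing.Theory.
Local Open Scope ring_scope.

(* The matrices X with X^T <= S and X <= R are exactly the Sb^T Y Rb, where Sb
   and Rb are row bases of S and R; hence they form a space of dimension
   rank S * rank R.  Part (1) is the case S = ker T42^T, R = ker T31.
   For (2), apply rank-nullity successively to X |-> T41 X1, X |-> X2 T41 and
   X |-> T31 X1 - X2 T42.  The first two have images of dimensions r41 n2 and
   n3 r41.  On their common kernel the third has image
   {T31 A} + {B T42}, of dimension r31 n2 + n3 r42 - r31 r42: the trivial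
   intersections provide projections fixing T31 (resp. T42) and killing T41,
   so every T31 A + B T42 is reached from inside that kernel. *)

Section ColRowSpace.
Variables (F : fieldType) (m n : nat).

Section Sandwich.
Variables (r s : nat) (A : 'M[F]_(r, m)) (B : 'M[F]_(s, n)).

Let sandwich := linfun (mulmxr B \o mulmx A^T).

Lemma mem_limg_sandwich X :
  (X \in limg sandwich) = (X^T <= A)%MS && (X <= B)%MS.
Proof.
apply/memv_imgP/andP => [[Y _ ->] | [sXA sXB]].
  by rewrite lfunE /= !trmx_mul trmxK mulmxA; split; apply: submxMl.
exists ((X^T *m pinvmx A)^T *m pinvmx B); first exact: memvf.
by rewrite lfunE /= mulmxA -trmx_mul (mulmxKpV sXA) trmxK (mulmxKpV sXB).
Qed.

Lemma dim_limg_sandwich :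
  row_free A -> row_free B -> \dim (limg sandwich) = (r * s)%N.
Proof.
move=> frA frB; rewrite limg_dim_eq ?dimvf ?dim_matrix // capfv.
apply/eqP/lker0P => Y1 Y2; rewrite !lfunE /= => /(row_free_inj frB).
move/(congr1 trmx); rewrite !trmx_mul !trmxK => /(row_free_inj frA).
by move/(congr1 trmx); rewrite !trmxK.
Qed.

End Sandwich.

Definition colrow_mxspace p q (S : 'M[F]_(p, m)) (R : 'M[F]_(q, n))
  : {vspace 'M[F]_(m, n)} :=
  limg (linfun (mulmxr (row_base R) \o mulmx (row_base S)^T)).

Lemma colrow_mxspaceP p q (S : 'M[F]_(p, m)) (R : 'M[F]_(q, n)) X :
  (X \in colrow_mxspace S R) = (X^T <= S)%MS && (X <= R)%MS.
Proof. by rewrite mem_limg_sandwich !eq_row_base. Qed.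

Lemma dim_colrow_mxspace p q (S : 'M[F]_(p, m)) (R : 'M[F]_(q, n)) :
  \dim (colrow_mxspace S R) = (\rank S * \rank R)%N.
Proof. by rewrite dim_limg_sandwich ?row_base_free. Qed.

Lemma colrow_mxspace_cap p q (S : 'M[F]_(p, m)) (R : 'M[F]_(q, n)) :
  (colrow_mxspace S 1%:M :&: colrow_mxspace 1%:M R)%VS = colrow_mxspace S R.
Proof.
by apply/vspaceP => X; rewrite memv_cap !colrow_mxspaceP !submx1 andbT.
Qed.

End ColRowSpace.

Section TwoSidedKernel.
Variables (F : fieldType) (m n p q : nat) (T : 'M[F]_(p, m)) (U : 'M[F]_(n, q)).

Definition two_sided_kernel : {vspace 'M[F]_(m, n)} :=
  colrow_mxspace (kermx T^T) (kermx U).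

Lemma mem_two_sided_kernel X :
  (X \in two_sided_kernel) = (T *m X == 0) && (X *m U == 0).
Proof.
rewrite colrow_mxspaceP !sub_kermx -trmx_mul; congr andb.
by rewrite -trmx0 (inj_eq trmx_inj).
Qed.

Lemma dim_two_sided_kernel :
  \dim two_sided_kernel = ((m - \rank T) * (n - \rank U))%N.
Proof. by rewrite dim_colrow_mxspace !mxrank_ker mxrank_tr. Qed.

End TwoSidedKernel.

Lemma cap0_projector (F : fieldType) (m p n : nat)
    (A : 'M[F]_(m, n)) (C : 'M[F]_(p, n)) :
  (A :&: C)%MS == 0 -> exists2 P : 'M[F]_n, A *m P = A & C *m P = 0.
Proof.
move=> /eqP AC0.
have genAC0 : (<<A>> :&: <<C>> = 0)%MS.
  by apply/eqP; rewrite -submx0 (cap_eqmx (genmxE _) (genmxE _)) AC0 submx_refl.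
by exists (proj_mx <<A>>%MS <<C>>%MS); [apply: proj_mx_id | apply: proj_mx_0];
  rewrite ?genmxE.
Qed.

Section CoupledSpace.
Variables (F : fieldType) (n1 n2 n3 n4 : nat).
Variables (T31 : 'M[F]_(n3, n1)) (T42 : 'M[F]_(n4, n2)) (T41 : 'M[F]_(n4, n1)).
Hypothesis rows_disjoint : (T31 :&: T41)%MS == 0.
Hypothesis cols_disjoint : (T42^T :&: T41^T)%MS == 0.

Local Notation Dom := ('M[F]_(n1, n2) * 'M[F]_(n3, n4))%type.

Let left_ann := linfun (mulmx T41 \o fst : Dom -> _).
Let right_ann := linfun (mulmxr T41 \o snd : Dom -> _).
Let coupling := linfun (mulmx T31 \o fst : Dom -> _) - linfun (mulmxr T42 \o snd).
Let K := (lker left_ann :&: lker right_ann)%VS.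

Definition coupled_space : {vspace Dom} := (K :&: lker coupling)%VS.

Lemma mem_coupled_space X : (X \in coupled_space) =
  [&& T31 *m X.1 == X.2 *m T42, T41 *m X.1 == 0 & X.2 *m T41 == 0].
Proof.
by rewrite !memv_cap !memv_ker add_lfunE opp_lfunE !lfunE subr_eq0 andbC.
Qed.

Lemma limg_left_ann : (left_ann @: fullv)%VS = colrow_mxspace T41^T 1%:M.
Proof.
apply/vspaceP => Y; rewrite colrow_mxspaceP submx1 andbT.
apply/memv_imgP/submxP => [[X _ ->] | [D eY]].
  by exists X.1^T; rewrite lfunE trmx_mul.
by exists (D^T, 0); rewrite ?memvf // lfunE /= -[Y]trmxK eY trmx_mul trmxK.
Qed.

Lemma limg_right_ann : (right_ann @: lker left_ann)%VS = colrow_mxspace 1%:M T41.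
Proof.
apply/vspaceP => Y; rewrite colrow_mxspaceP submx1.
apply/memv_imgP/submxP => [[X _ ->] | [D ->]]; first by exists X.2; rewrite lfunE.
by exists (0, D); rewrite ?lfunE // memv_ker lfunE /= mulmx0.
Qed.

Lemma limg_coupling :
  (coupling @: K)%VS = (colrow_mxspace T31^T 1%:M + colrow_mxspace 1%:M T42)%VS.
Proof.
have [P P31 P41] := cap0_projector rows_disjoint.
have [Q Q42 Q41] := cap0_projector cols_disjoint.
apply/vspaceP => Y; apply/memv_imgP/memv_addP => [[X _ ->] | ].
  rewrite add_lfunE opp_lfunE !lfunE /=.
  exists (T31 *m X.1); first by rewrite colrow_mxspaceP submx1 trmx_mul submxMl.
  by exists (- (X.2 *m T42)); rewrite // colrow_mxspaceP submx1 -mulNmx submxMl.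
case=> u; rewrite colrow_mxspaceP submx1 andbT => /submxP[A eu] [v].
rewrite colrow_mxspaceP submx1 => /submxP[B ->] ->.
have QtT42 : Q^T *m T42 = T42 by rewrite -[T42]trmxK -trmx_mul Q42.
have QtT41 : Q^T *m T41 = 0 by rewrite -[T41]trmxK -trmx_mul Q41 trmx0.
exists (P *m A^T, - (B *m Q^T)).
  rewrite !memv_cap !memv_ker !lfunE /= mulmxA P41 mul0mx eqxx /=.
  by rewrite mulNmx -mulmxA QtT41 mulmx0 oppr0.
rewrite add_lfunE opp_lfunE !lfunE /= mulmxA P31 mulNmx opprK -mulmxA QtT42.
by rewrite -[u]trmxK eu trmx_mul trmxK.
Qed.

Lemma dim_coupled_space :
  (\rank T41 * n2 + \rank T41 * n3 + \rank T31 * \rank T42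
   + (n2 - \rank T42) * \rank T31 + (n3 - \rank T31) * \rank T42
   + \dim coupled_space = n1 * n2 + n3 * n4)%N.
Proof.
have := limg_ker_dim left_ann fullv; rewrite capfv limg_left_ann.
have := limg_ker_dim right_ann (lker left_ann); rewrite limg_right_ann.
have := limg_ker_dim coupling K; rewrite limg_coupling.
have := dimv_sum_cap (colrow_mxspace T31^T 1%:M) (colrow_mxspace 1%:M T42).
rewrite colrow_mxspace_cap !dim_colrow_mxspace !mxrank_tr !mxrank1 dimvf.
have -> : dim Dom = (n1 * n2 + n3 * n4)%N by [].
rewrite /coupled_space -/K.
set l := \dim (lker left_ann); set k := \dim K.
set c := \dim (_ + _)%VS; set d := \dim (K :&: _)%VS.
have := rank_leq_col T42; have := rank_leq_row T31; nia.
Qed.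

End CoupledSpace.

Theorem lemma3p3 (F : fieldType) (n1 n2 n3 n4 : nat)
  (hn1 : (0 < n1)%N) (hn2 : (0 < n2)%N) (hn3 : (0 < n3)%N) (hn4 : (0 < n4)%N) :
  (* (1) *)
  (forall (T42 : 'M[F]_(n4, n2)) (T31 : 'M[F]_(n3, n1)),
     exists V : {vspace 'M[F]_(n2, n3)},
       (forall X : 'M[F]_(n2, n3),
          (X \in V) = (T42 *m X == 0) && (X *m T31 == 0)) /\
       ((\dim {: 'M[F]_(n2, n3)})%:Z - (\dim V)%:Z
        = (n3 * \rank T42 + n2 * \rank T31)%:Z - (\rank T31 * \rank T42)%:Z)%R)
  /\
  (* (2) *)
  (forall (T31 : 'M[F]_(n3, n1)) (T42 : 'M[F]_(n4, n2)) (T41 : 'M[F]_(n4, n1)),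
     (T31 :&: T41)%MS == 0 ->
     (T42^T :&: T41^T)%MS == 0 ->
     exists V : {vspace ('M[F]_(n1, n2) * 'M[F]_(n3, n4))%type},
       (forall X : ('M[F]_(n1, n2) * 'M[F]_(n3, n4))%type,
          (X \in V) = [&& T31 *m X.1 == X.2 *m T42,
                          T41 *m X.1 == 0 & X.2 *m T41 == 0]) /\
       ((\dim {: ('M[F]_(n1, n2) * 'M[F]_(n3, n4))%type})%:Z - (\dim V)%:Z
        = (\rank T41 * n2 + \rank T41 * n3 + \rank T31 * \rank T42
           + (n2 - \rank T42) * \rank T31
           + (n3 - \rank T31) * \rank T42)%N%:Z)%R).
Proof.
split=> [T42 T31 | T31 T42 T41 rows_disjoint cols_disjoint].
  exists (two_sided_kernel T42 T31); split; first exact: mem_two_sided_kernel.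
  rewrite dim_two_sided_kernel dimvf dim_matrix.
  have := rank_leq_col T42; have := rank_leq_row T31; nia.
exists (coupled_space T31 T42 T41); split; first exact: mem_coupled_space.
rewrite dimvf (_ : dim _ = n1 * n2 + n3 * n4)%N //.
by rewrite -(dim_coupled_space rows_disjoint cols_disjoint) PoszD addrK.
Qed.
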